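(* Let $k>l\ge0$ be integers, $\xi\in\mathbb{C}$, and $f:\mathbb{N}\to[0,\infty)$. Assume there exist $\kappa>0$ and $N\in\mathbb{N}$ such that $f(n)\ge\kappa|\xi|\beta^{kl}_n$ for all $n\ge N$. Then for all $\psi\in\mathcal{D}_0$, $$\|\xi(a^\dagger)^ka^l\psi+\xi^*(a^\dagger)^la^k\psi\|\le\frac{2}{\kappa}\|f(a^\dagger a)\psi\|+2|\xi|\beta^{kl}_{N-1}\|\psi\|.$$
   Context: $\mathbb{N}=\{0,1,2,\dots\}$. $\mathcal{H}$ is a separable complex Hilbert space with orthonormal basis $(\phi_n)_{n\in\mathbb{N}}$; $\mathcal{D}_0$ is the set of finite linear combinations of the $\phi_n$. The operators $a,a^\dagger$ have domain $\mathcal{D}_0$ and act by $a\phi_n=\sqrt{n}\,\phi_{n-1}$ ($a\phi_0=0$), $a^\dagger\phi_n=\sqrt{n+1}\,\phi_{n+1}$, extended linearly. $f(a^\dagger a)$ has domain $\mathcal{D}_0$ and $f(a^\dagger a)\phi_n=f(n)\phi_n$. For integers $x$ and $s\ge0$, $(x,s)=x(x+1)\cdots(x+s-1)$ ($=1$ if $s=0$), with the convention $(x,s)=0$ whenever $x$ is a negative integer; for integers $n$ and $k,l\ge0$, $\beta^{kl}_n=\sqrt{(n-l+1,l)(n-l+1,k)}$. *)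

From HB Require Import structures.
From mathcomp Require Import all_boot all_order all_algebra.
From mathcomp Require Import complex.
From mathcomp Require Import classical_sets reals.
Set Implicit Arguments. Unset Strict Implicit. Unset Printing Implicit Defensive.
Import Order.TTheory GRing.Theory Num.Theory.
Local Open Scope ring_scope.
Local Open Scope complex_scope.

(* The Hilbert space H with orthonormal basis (phi_n) is identified with the
   space of coefficient sequences nat -> C (C = R[i], R a real-number type);
   a vector psi = sum_n psi n phi_n. *)
Section Fock.
Variable R : realType.
Local Notation C := R[i].

Definition vec := nat -> C.

Definition cabs (z : C) : R := ComplexField.Normc.normc z.

Definition inD0 (psi : vec) : Prop := exists M : nat, forall n, (M <= n)%N -> psi n = 0.

Definition hnorm (psi : vec) : R :=
  Num.sqrt (sup [set (\sum_(n < M) cabs (psi n) ^+ 2) | M in [set: nat]]).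

(* annihilation a phi_n = sqrt n phi_{n-1}: coefficient of phi_n in a psi *)
Definition ann (psi : vec) : vec := fun n => (Num.sqrt (n.+1)%:R)%:C * psi n.+1.

(* creation a^dag phi_n = sqrt(n+1) phi_{n+1} *)
Definition adag (psi : vec) : vec :=
  fun n => match n with 0 => 0 | m.+1 => (Num.sqrt (m.+1)%:R)%:C * psi m end.

(* f(a^dag a) phi_n = f n phi_n *)
Definition fnum (f : nat -> R) (psi : vec) : vec := fun n => (f n)%:C * psi n.

(* rising factorial (x,s) = x(x+1)...(x+s-1), with (x,s) = 0 for x a negative integer *)
Definition poch (x : int) (s : nat) : R :=
  if (x < 0)%R then 0 else \prod_(i < s) (x + i%:Z)%:~R.

Definition beta (k l : nat) (n : int) : R :=
  Num.sqrt (poch (n - l%:Z + 1) l * poch (n - l%:Z + 1) k).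

End Fock.

(* In coordinates ((a^dag)^k a^l psi)_n = beta^{kl}_{n-k+l} psi_{n-k+l}.  With
   d = k - l > 0 and g_m = |xi| beta^{kl}_m psi_m, the first term is g shifted up
   by d, and since beta^{lk}_{m+d} = beta^{kl}_m <= beta^{kl}_{m+d} the second one
   is dominated by g shifted down by d; so the square of the left-hand side is at
   most 4 ||g||^2.  Pointwise |xi| beta^{kl}_m <= f(m)/kappa for m >= N, and
   |xi| beta^{kl}_m <= |xi| beta^{kl}_{N-1} for m < N by monotonicity, whence
   ||g||^2 <= X^2 + Y^2 with X = ||f(a^dag a) psi||/kappa, Y = |xi| beta^{kl}_{N-1}
   ||psi||, and 4 (X^2 + Y^2) <= (2X + 2Y)^2. *)

From HB Require Import structures.
From mathcomp Require Import all_boot all_order all_algebra.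
From mathcomp Require Import complex.
From mathcomp Require Import classical_sets reals.
From mathcomp Require Import zify ring lra.
Import Order.TTheory GRing.Theory Num.Theory.
Local Open Scope ring_scope.
Local Open Scope complex_scope.

Section Fock.
Context {R : realType}.
Local Notation C := R[i].
Implicit Types (z : C) (phi psi chi omega : vec R).

Lemma cabs_ge0 z : 0 <= cabs z.
Proof. by case: z => a b; exact: sqrtr_ge0. Qed.

Lemma cabs0 : cabs (0 : C) = 0.
Proof. exact: ComplexField.Normc.normc0. Qed.

Lemma cabsM (y z : C) : cabs (y * z) = cabs y * cabs z.
Proof. exact: ComplexField.Normc.normcM. Qed.

Lemma cabs_real (x : R) : cabs x%:C = `|x|.
Proof. by rewrite /cabs /ComplexField.Normc.normc /= expr0n addr0 sqrtr_sqr. Qed.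

Lemma cabs_conj z : cabs z^* = cabs z.
Proof. by case: z => a b; rewrite /cabs /ComplexField.Normc.normc /= sqrrN. Qed.

Lemma cabs_sqr_le0 z : cabs z ^+ 2 <= 0 -> z = 0.
Proof.
move=> le0; apply: ComplexField.Normc.eq0_normc; apply/eqP.
by rewrite -sqrf_eq0 eq_le le0 sqr_ge0.
Qed.

Lemma cabsD_sqr_le (y z : C) :
  cabs (y + z) ^+ 2 <= 2 * cabs y ^+ 2 + 2 * cabs z ^+ 2.
Proof.
have le_yz : cabs (y + z) <= cabs y + cabs z := le_normcD y z.
have := cabs_ge0 y; have := cabs_ge0 z; have := cabs_ge0 (y + z).
have := sqr_ge0 (cabs y - cabs z); nra.
Qed.

Definition supp_below (M : nat) phi := forall n, (M <= n)%N -> phi n = 0.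

Lemma supp_below_le M M' phi :
  (M <= M')%N -> supp_below M phi -> supp_below M' phi.
Proof. by move=> le_MM' phiM n le_M'n; apply: phiM; apply: leq_trans le_M'n. Qed.

Lemma hnormE {M phi} :
  supp_below M phi -> hnorm phi = Num.sqrt (\sum_(n < M) cabs (phi n) ^+ 2).
Proof.
move=> phiM; rewrite /hnorm; congr Num.sqrt.
pose F n := cabs (phi n) ^+ 2; pose S j := \sum_(n < j) F n.
have S_le j : S j <= S M.
  rewrite /S -[\sum_(n < j) _](big_mkord xpredT) -[\sum_(n < M) _](big_mkord xpredT).
  have [le_jM | /ltnW le_Mj] := leqP j M.
    by rewrite (big_cat_nat (leq0n j) le_jM) lerDl sumr_ge0 // => n _; exact: sqr_ge0.
  rewrite (big_cat_nat (leq0n M) le_Mj) /= [X in _ + X]big_nat_cond.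
  rewrite [X in _ + X]big1 ?addr0 // => n.
  by case/andP=> /andP[le_Mn _] _; rewrite /F phiM // cabs0 expr0n.
apply/le_anti/andP; split.
  by apply: ge_sup; [exists (S M), M | move=> _ [j _ <-]; exact: S_le].
apply: sup_upper_bound; last by exists M.
split; first by exists (S M), M.
by exists (S M) => _ [j _ <-]; exact: S_le.
Qed.

Lemma hnorm_ge0 phi : 0 <= hnorm phi.
Proof. exact: sqrtr_ge0. Qed.

Lemma hnorm_sqr_le (a b : R) phi chi omega :
  inD0 chi -> inD0 omega ->
  (forall n, cabs (phi n) ^+ 2 <= a * cabs (chi n) ^+ 2 + b * cabs (omega n) ^+ 2) ->
  hnorm phi ^+ 2 <= a * hnorm chi ^+ 2 + b * hnorm omega ^+ 2.
Proof.
move=> [Mc chiM] [Mo omegaM] le_phi; set M := maxn Mc Mo.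
have {}chiM : supp_below M chi by apply: supp_below_le chiM; exact: leq_maxl.
have {}omegaM : supp_below M omega by apply: supp_below_le omegaM; exact: leq_maxr.
have phiM : supp_below M phi.
  move=> n le_Mn; apply: cabs_sqr_le0; apply: le_trans (le_phi n) _.
  by rewrite chiM ?omegaM // cabs0 expr0n !mulr0 addr0.
have sqr_sum psi : supp_below M psi -> hnorm psi ^+ 2 = \sum_(n < M) cabs (psi n) ^+ 2.
  by move=> psiM; rewrite (hnormE psiM) sqr_sqrtr // sumr_ge0 // => n _; exact: sqr_ge0.
rewrite !sqr_sum // !mulr_sumr -big_split /=.
by apply: ler_sum => n _; exact: le_phi.
Qed.

Definition shift_up (d : nat) phi : vec R :=
  fun n => if (d <= n)%N then phi (n - d)%N else 0.

Definition shift_down (d : nat) phi : vec R := fun n => phi (n + d)%N.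

Lemma inD0_fnum (w : nat -> R) phi : inD0 phi -> inD0 (fnum w phi).
Proof. by case=> M phiM; exists M => n le_Mn; rewrite /fnum phiM ?mulr0. Qed.

Lemma supp_below_shift_up d {M phi} :
  supp_below M phi -> supp_below (d + M) (shift_up d phi).
Proof.
move=> phiM n le_n; rewrite /shift_up.
by case: ifP => // le_dn; rewrite phiM //; lia.
Qed.

Lemma inD0_shift_up d phi : inD0 phi -> inD0 (shift_up d phi).
Proof. by case=> M phiM; exists (d + M)%N; exact: supp_below_shift_up. Qed.

Lemma supp_below_shift_down d {M phi} :
  supp_below M phi -> supp_below M (shift_down d phi).
Proof. by move=> phiM n le_Mn; rewrite /shift_down phiM //; lia. Qed.

Lemma inD0_shift_down d phi : inD0 phi -> inD0 (shift_down d phi).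
Proof. by case=> M phiM; exists M; exact: supp_below_shift_down. Qed.

Lemma hnorm_shift_up d phi : inD0 phi -> hnorm (shift_up d phi) = hnorm phi.
Proof.
case=> M phiM; rewrite (hnormE phiM) (hnormE (supp_below_shift_up d phiM)).
rewrite big_split_ord /= big1 ?add0r => [|i _]; last first.
  by rewrite /shift_up leqNgt ltn_ord cabs0 expr0n.
by congr Num.sqrt; apply: eq_bigr => i _; rewrite /shift_up /= leq_addr addKn.
Qed.

Lemma hnorm_shift_down_le d phi : inD0 phi -> hnorm (shift_down d phi) <= hnorm phi.
Proof.
case=> M phiM; have phiMd : supp_below (d + M) phi by apply: supp_below_le phiM; lia.
rewrite (hnormE (supp_below_shift_down d phiM)) (hnormE phiMd) ler_wsqrtr //.
rewrite big_split_ord /=.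
rewrite (eq_bigr (fun i : 'I_M => cabs (phi (d + i)%N) ^+ 2)) => [|i _]; last first.
  by rewrite /shift_down addnC.
by rewrite lerDr sumr_ge0 // => i _; exact: sqr_ge0.
Qed.

Lemma poch_ge0 x s : 0 <= poch R x s.
Proof.
rewrite /poch; have [//|x_ge0] := ltP x 0.
by apply: prodr_ge0 => i _; rewrite ler0z addr_ge0.
Qed.

Lemma poch0 x : 0 <= x -> poch R x 0 = 1.
Proof. by rewrite /poch ltNge => ->; rewrite big_ord0. Qed.

Lemma pochSl x s : 0 <= x -> poch R x s.+1 = x%:~R * poch R (x + 1) s.
Proof.
move=> x_ge0; rewrite /poch ltNge x_ge0 ltNge addr_ge0 //= big_ord_recl addr0.
by congr (_ * _); apply: eq_bigr => i _; rewrite -addrA -PoszD add1n.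
Qed.

Lemma pochSr x s : 0 <= x -> poch R x s.+1 = poch R x s * (x + s%:Z)%:~R.
Proof. by move=> x_ge0; rewrite /poch ltNge x_ge0 /= big_ord_recr. Qed.

Lemma poch_le x y s : x <= y -> poch R x s <= poch R y s.
Proof.
move=> le_xy; rewrite {1}/poch; have [_|x_ge0] := ltP x 0; first exact: poch_ge0.
rewrite /poch ltNge (le_trans x_ge0 le_xy) /=.
by apply: ler_prod => i _; rewrite ler0z addr_ge0 //= ler_int lerD2r.
Qed.

Lemma beta_le k l x y : x <= y -> beta R k l x <= beta R k l y.
Proof.
move=> le_xy; apply: ler_wsqrtr; apply: ler_pM; rewrite ?poch_ge0 //;
by apply: poch_le; rewrite !lerD2r.
Qed.

Lemma beta_swap k l x : beta R l k (x + k%:Z - l%:Z) = beta R k l x.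
Proof.
rewrite /beta mulrC; congr (Num.sqrt (poch R _ _ * poch R _ _)); ring.
Qed.

Lemma iter_annE l psi n :
  iter l (@ann R) psi n = (Num.sqrt (poch R n.+1%:Z l))%:C * psi (n + l)%N.
Proof.
elim: l n => [|l IHl] n; first by rewrite poch0 // sqrtr1 mul1r addn0.
rewrite iterS /ann IHl pochSl // sqrtrM // rmorphM mulrA addSnnS.
by congr (_ * (Num.sqrt (poch R _ _))%:C * _); rewrite -PoszD addn1.
Qed.

Lemma iter_adagE k phi n :
  iter k (@adag R) phi n =
  if (k <= n)%N then (Num.sqrt (poch R (n - k).+1%:Z k))%:C * phi (n - k)%N else 0.
Proof.
elim: k n => [|k IHk] n; first by rewrite poch0 // sqrtr1 mul1r subn0.
case: n => [|n] //=; rewrite IHk ltnS subSS; case: ifP => le_kn; last by rewrite mulr0.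
rewrite pochSr //.
have -> : (n - k).+1%:Z + k%:Z = n.+1%:Z by rewrite -PoszD; congr Posz; lia.
by rewrite sqrtrM ?poch_ge0 // rmorphM mulrCA -mulrA.
Qed.

Lemma iter_adag_annE k l psi n :
  iter k (@adag R) (iter l (@ann R) psi) n =
  if (k <= n)%N then (beta R k l (n - k + l)%N%:Z)%:C * psi (n - k + l)%N else 0.
Proof.
rewrite iter_adagE /beta; case: ifP => // _.
have -> : (n - k + l)%N%:Z - l%:Z + 1 = (n - k).+1%:Z.
  by rewrite PoszD addrK -[1]/(Posz 1) -PoszD addn1.
by rewrite iter_annE mulrA -rmorphM -sqrtrM ?poch_ge0 // [poch R _ k * _]mulrC.
Qed.

Lemma cabs_adag_ann_up_le k l z psi n : (l <= k)%N ->
  cabs (z * iter k (@adag R) (iter l (@ann R) psi) n)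
  <= cabs (shift_up (k - l) (fnum (fun m : nat => cabs z * beta R k l m%:Z) psi) n).
Proof.
move=> le_lk; rewrite iter_adag_annE /shift_up /fnum.
case: ifP => [le_kn | _]; last by rewrite mulr0 cabs0 cabs_ge0.
have -> : (k - l <= n)%N by lia.
have -> : (n - (k - l) = n - k + l)%N by lia.
rewrite !cabsM !cabs_real normrM (ger0_norm (cabs_ge0 z)) mulrA.
by rewrite (ger0_norm (sqrtr_ge0 _)).
Qed.

Lemma cabs_adag_ann_down_le k l z psi n : (l <= k)%N ->
  cabs (z * iter l (@adag R) (iter k (@ann R) psi) n)
  <= cabs (shift_down (k - l) (fnum (fun m : nat => cabs z * beta R k l m%:Z) psi) n).
Proof.
move=> le_lk; rewrite iter_adag_annE /shift_down /fnum.
case: ifP => [le_ln | _]; last by rewrite mulr0 cabs0 cabs_ge0.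
have -> : (n - l + k = n + (k - l))%N by lia.
have -> : (n + (k - l))%N%:Z = n%:Z + k%:Z - l%:Z by lia.
rewrite beta_swap !cabsM !cabs_real normrM (ger0_norm (cabs_ge0 z)) mulrA.
rewrite !(ger0_norm (sqrtr_ge0 _)) ler_wpM2r ?cabs_ge0 // ler_wpM2l ?cabs_ge0 //.
by apply: beta_le; lia.
Qed.

Lemma beta_weight_sqr_le {k l z} {f : nat -> R} {kappa N} : 0 < kappa ->
  (forall n : nat, (N <= n)%N -> kappa * cabs z * beta R k l n%:Z <= f n) ->
  forall m : nat, (cabs z * beta R k l m%:Z) ^+ 2
    <= (f m / kappa) ^+ 2 + (cabs z * beta R k l (N%:Z - 1)) ^+ 2.
Proof.
move=> kappa_gt0 hf m.
have w_ge0 x : 0 <= cabs z * beta R k l x by rewrite mulr_ge0 ?cabs_ge0 ?sqrtr_ge0.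
have [le_Nm | lt_mN] := leqP N m.
  have le_w : cabs z * beta R k l m%:Z <= f m / kappa.
    by rewrite ler_pdivlMr // mulrC mulrA; exact: hf.
  rewrite ler_wpDr ?sqr_ge0 // ler_sqr ?nnegrE ?w_ge0 //.
  exact: le_trans (w_ge0 _) le_w.
rewrite ler_wpDl ?sqr_ge0 // ler_sqr ?nnegrE ?w_ge0 // ler_wpM2l ?cabs_ge0 //.
by apply: beta_le; lia.
Qed.

Lemma hnorm_adag_ann_sqr_le {k l} z {psi} : (l <= k)%N -> inD0 psi ->
  hnorm (fun n => z * iter k (@adag R) (iter l (@ann R) psi) n
                  + z^* * iter l (@adag R) (iter k (@ann R) psi) n) ^+ 2
  <= 4 * hnorm (fnum (fun m : nat => cabs z * beta R k l m%:Z) psi) ^+ 2.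
Proof.
move=> le_lk psiD0; set g := fnum _ psi; have gD0 : inD0 g by exact: inD0_fnum.
have le_down : hnorm (shift_down (k - l) g) ^+ 2 <= hnorm g ^+ 2.
  by rewrite ler_sqr ?nnegrE ?hnorm_ge0 ?hnorm_shift_down_le.
apply: le_trans (_ : _ <= 2 * hnorm (shift_up (k - l) g) ^+ 2
                          + 2 * hnorm (shift_down (k - l) g) ^+ 2) _.
  apply: hnorm_sqr_le => [||n]; [exact: inD0_shift_up | exact: inD0_shift_down |].
  apply: le_trans (cabsD_sqr_le _ _) _.
  rewrite lerD // ler_pM2l // ler_sqr ?nnegrE ?cabs_ge0 //.
    exact: cabs_adag_ann_up_le.
  by have := cabs_adag_ann_down_le k l z^* psi n le_lk; rewrite cabs_conj.
rewrite hnorm_shift_up //; lra.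
Qed.

Lemma hnorm_beta_weight_sqr_le {k l z} {f : nat -> R} {kappa N psi} : 0 < kappa ->
  (forall n : nat, (N <= n)%N -> kappa * cabs z * beta R k l n%:Z <= f n) ->
  inD0 psi ->
  hnorm (fnum (fun m : nat => cabs z * beta R k l m%:Z) psi) ^+ 2
  <= (hnorm (fnum f psi) / kappa) ^+ 2
     + (cabs z * beta R k l (N%:Z - 1) * hnorm psi) ^+ 2.
Proof.
move=> kappa_gt0 hf psiD0; rewrite expr_div_n mulrC exprMn.
apply: hnorm_sqr_le => [||m]; [exact: inD0_fnum | exact: psiD0 |].
have := beta_weight_sqr_le kappa_gt0 hf m; have := sqr_ge0 (cabs (psi m)).
rewrite /fnum !cabsM !cabs_real !exprMn !real_normK ?num_real // exprVn.
nra.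
Qed.

End Fock.

Theorem lemma3p4 (R : realType) (k l : nat) (xi : R[i]) (f : nat -> R) :
  (l < k)%N ->
  (forall n, 0 <= f n) ->
  forall (kappa : R) (N : nat), 0 < kappa ->
  (forall n : nat, (N <= n)%N -> kappa * cabs xi * beta R k l n%:Z <= f n) ->
  forall psi : vec R, inD0 psi ->
  hnorm (fun n => xi * iter k (@adag R) (iter l (@ann R) psi) n
                  + xi^* * iter l (@adag R) (iter k (@ann R) psi) n)
  <= 2 / kappa * hnorm (fnum f psi)
     + 2 * cabs xi * beta R k l (N%:Z - 1) * hnorm psi.
Proof.
move=> /ltnW le_lk _ kappa N kappa_gt0 hf psi psiD0.
have le_lhs := hnorm_adag_ann_sqr_le xi le_lk psiD0.
have le_g := hnorm_beta_weight_sqr_le kappa_gt0 hf psiD0.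
set X := hnorm (fnum f psi) / kappa in le_g *.
set Y := cabs xi * beta R k l (N%:Z - 1) * hnorm psi in le_g *.
have -> : 2 / kappa * hnorm (fnum f psi) + 2 * cabs xi * beta R k l (N%:Z - 1) * hnorm psi
          = 2 * (X + Y) by rewrite /X /Y; ring.
have X_ge0 : 0 <= X by rewrite divr_ge0 ?hnorm_ge0 ?ltW.
have Y_ge0 : 0 <= Y by rewrite !mulr_ge0 ?hnorm_ge0 ?cabs_ge0 ?sqrtr_ge0.
have XY_ge0 : 0 <= X * Y by exact: mulr_ge0.
rewrite -ler_sqr ?nnegrE ?hnorm_ge0 ?mulr_ge0 ?addr_ge0 //.
lra.
Qed.
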